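(* Let $H$ be a hyperring and $\mathrm{Mod}_H$ the category of $H$-modules. Let $\mathfrak{M}$ be the class of strict injective morphisms and $\mathfrak{E}$ the class of strict surjective morphisms in $\mathrm{Mod}_H$. Then $(\mathrm{Mod}_H,\mathfrak{M},\mathfrak{E})$ is a proto-exact category.
   Context: A hyperaddition on a set $M$ is a map $M\times M\to\mathcal{P}^*(M)$ (nonempty subsets), $(a,b)\mapsto a+b$, with $a+b=b+a$; for subsets, $A+B=\bigcup_{a\in A,b\in B}(a+b)$, and elements are identified with singletons. A hypergroup is a set with a hyperaddition such that $(a+b)+c=a+(b+c)$; there is a unique $0$ with $a+0=\{a\}$; each $a$ has a unique $-a$ with $0\in a+(-a)$; and $a\in b+c$ implies $c\in a+(-b)$. A hyperring is a hypergroup $H$ with a commutative monoid multiplication $(H,\cdot,1)$ such that $a(b+c)=ab+ac$ (and $0a=0$). An $H$-module is a hypergroup $M$ with a map $H\times M\to M$ such that $1m=m$, $0m=0$, $(xy)m=x(ym)$, $x(m_1+m_2)=xm_1+xm_2$, $(x+y)m=xm+ym$. A morphism of $H$-modules is a map $f$ with $f(0)=0$, $f(rm)=rf(m)$ and $f(a+b)\subseteq f(a)+f(b)$; it is strict if $f(a+b)=f(a)+f(b)$ for all $a,b$. A proto-exact category is a pointed category $\mathcal{C}$ with two classes of morphisms $\mathfrak{M}$ (admissible monomorphisms) and $\mathfrak{E}$ (admissible epimorphisms) such that: (1) for every object $A$, $0\to A$ lies in $\mathfrak{M}$ and $A\to 0$ lies in $\mathfrak{E}$; (2) $\mathfrak{M}$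 and $\mathfrak{E}$ contain all isomorphisms and are closed under composition; (3) a commutative square with top $i:A\to B$, bottom $i':A'\to B'$ in $\mathfrak{M}$ and left $j:A\to A'$, right $j':B\to B'$ in $\mathfrak{E}$ is a pullback if and only if it is a pushout; (4) every pair $i':A'\to B'$ in $\mathfrak{M}$, $j':B\to B'$ in $\mathfrak{E}$ can be completed to such a square which is both a pullback and a pushout, with $i\in\mathfrak{M}$, $j\in\mathfrak{E}$; (5) every pair $i:A\to B$ in $\mathfrak{M}$, $j:A\to A'$ in $\mathfrak{E}$ can be completed to such a square which is both a pullback and a pushout, with $i'\in\mathfrak{M}$, $j'\in\mathfrak{E}$. *)

From Stdlib Require Import Classical FunctionalExtensionality.

(* Subsets are predicates.  [hg_add a b c] means  c \in a + b. *)
Record hypergroup : Type := HyperGroup {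
  hg_car :> Type;
  hg_add : hg_car -> hg_car -> hg_car -> Prop;
  hg_zero : hg_car;
  hg_opp : hg_car -> hg_car;
  hg_add_nonempty : forall a b, exists c, hg_add a b c;
  hg_addC : forall a b c, hg_add a b c <-> hg_add b a c;
  (* (a + b) + c = a + (b + c) *)
  hg_addA : forall a b c x,
    (exists y, hg_add a b y /\ hg_add y c x) <->
    (exists y, hg_add b c y /\ hg_add a y x);
  hg_add0 : forall a x, hg_add a hg_zero x <-> x = a;
  hg_zero_unique : forall z, (forall a x, hg_add a z x <-> x = a) -> z = hg_zero;
  hg_addN : forall a, hg_add a (hg_opp a) hg_zero;
  hg_opp_unique : forall a b, hg_add a b hg_zero -> b = hg_opp a;
  hg_reversible : forall a b c, hg_add b c a -> hg_add a (hg_opp b) c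
}.

Arguments hg_add {h} _ _ _.
Arguments hg_zero {h}.
Arguments hg_opp {h} _.

Record hyperring : Type := HyperRing {
  hr_hg :> hypergroup;
  hr_mul : hr_hg -> hr_hg -> hr_hg;
  hr_one : hr_hg;
  hr_mulA : forall a b c, hr_mul a (hr_mul b c) = hr_mul (hr_mul a b) c;
  hr_mulC : forall a b, hr_mul a b = hr_mul b a;
  hr_mul1 : forall a, hr_mul hr_one a = a;
  (* a (b + c) = ab + ac *)
  hr_mulDr : forall a b c x,
    hg_add (hr_mul a b) (hr_mul a c) x <-> exists y, hg_add b c y /\ x = hr_mul a y;
  hr_mul0 : forall a, hr_mul hg_zero a = hg_zero
}.

Arguments hr_mul {h} _ _.
Arguments hr_one {h}.

Record hmodule (H : hyperring) : Type := HModule {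
  hm_hg :> hypergroup;
  hm_act : H -> hm_hg -> hm_hg;
  hm_act1 : forall m, hm_act hr_one m = m;
  hm_act0 : forall m, hm_act hg_zero m = hg_zero;
  hm_actA : forall x y m, hm_act (hr_mul x y) m = hm_act x (hm_act y m);
  (* x (m1 + m2) = x m1 + x m2 *)
  hm_actDr : forall x m1 m2 z,
    hg_add (hm_act x m1) (hm_act x m2) z <-> exists y, hg_add m1 m2 y /\ z = hm_act x y;
  (* (x + y) m = x m + y m *)
  hm_actDl : forall x y m z,
    hg_add (hm_act x m) (hm_act y m) z <-> exists r, hg_add x y r /\ z = hm_act r m
}.

Arguments hm_act {H h} _ _.

Record hmod_hom {H : hyperring} (M N : hmodule H) : Type := HModHom {
  hom_fun :> M -> N;
  hom_zero : hom_fun hg_zero = hg_zero;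
  hom_act : forall r m, hom_fun (hm_act r m) = hm_act r (hom_fun m);
  hom_add : forall a b c, hg_add a b c -> hg_add (hom_fun a) (hom_fun b) (hom_fun c)
}.

Arguments hom_fun {H M N} _ _.

Definition hom_comp {H : hyperring} {A B C : hmodule H}
  (g : hmod_hom B C) (f : hmod_hom A B) : hmod_hom A C.
Proof.
  refine (@HModHom H A C (fun x => g (f x)) _ _ _).
  - rewrite (hom_zero _ _ f). apply hom_zero.
  - intros r m. rewrite (hom_act _ _ f). apply hom_act.
  - intros a b c Habc. apply hom_add, hom_add, Habc.
Defined.

(* Strict morphisms: f(a+b) = f(a)+f(b). *)
Definition strict {H : hyperring} {M N : hmodule H} (f : hmod_hom M N) : Prop :=
  forall a b z, hg_add (f a) (f b) z <-> exists c, hg_add a b c /\ z = f c.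

Definition injective_hom {H : hyperring} {M N : hmodule H} (f : hmod_hom M N) : Prop :=
  forall x y, f x = f y -> x = y.

Definition surjective_hom {H : hyperring} {M N : hmodule H} (f : hmod_hom M N) : Prop :=
  forall y, exists x, f x = y.

Definition strict_mono {H : hyperring} {M N : hmodule H} (f : hmod_hom M N) : Prop :=
  strict f /\ injective_hom f.

Definition strict_epi {H : hyperring} {M N : hmodule H} (f : hmod_hom M N) : Prop :=
  strict f /\ surjective_hom f.

(* ---- Categorical notions in Mod_H.  Morphisms are equal iff their underlying
   functions are (pointwise) equal; we state equalities of morphisms pointwise. *)

Definition hom_eq {H : hyperring} {M N : hmodule H} (f g : hmod_hom M N) : Prop :=
  forall x, f x = g x.

Definition is_iso {H : hyperring} {M N : hmodule H} (f : hmod_hom M N) : Prop :=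
  exists g : hmod_hom N M, (forall x, g (f x) = x) /\ (forall y, f (g y) = y).

Definition is_zero_object {H : hyperring} (Z : hmodule H) : Prop :=
  forall A : hmodule H,
    (exists f : hmod_hom Z A, forall f' : hmod_hom Z A, hom_eq f' f) /\
    (exists g : hmod_hom A Z, forall g' : hmod_hom A Z, hom_eq g' g).

Definition morph_class (H : hyperring) : Type :=
  forall (M N : hmodule H), hmod_hom M N -> Prop.

(* Square
       A  --i-->  B
       |j         |j'
       v          v
       A' --i'--> B'                                                          *)
Definition commutes {H : hyperring} {A B A' B' : hmodule H}
  (i : hmod_hom A B) (j : hmod_hom A A') (i' : hmod_hom A' B') (j' : hmod_hom B B') : Prop :=
  hom_eq (hom_comp j' i) (hom_comp i' j).

Definition is_pullback {H : hyperring} {A B A' B' : hmodule H}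
  (i : hmod_hom A B) (j : hmod_hom A A') (i' : hmod_hom A' B') (j' : hmod_hom B B') : Prop :=
  commutes i j i' j' /\
  forall (X : hmodule H) (u : hmod_hom X A') (v : hmod_hom X B),
    hom_eq (hom_comp i' u) (hom_comp j' v) ->
    exists w : hmod_hom X A,
      hom_eq (hom_comp j w) u /\ hom_eq (hom_comp i w) v /\
      forall w' : hmod_hom X A,
        hom_eq (hom_comp j w') u -> hom_eq (hom_comp i w') v -> hom_eq w' w.

Definition is_pushout {H : hyperring} {A B A' B' : hmodule H}
  (i : hmod_hom A B) (j : hmod_hom A A') (i' : hmod_hom A' B') (j' : hmod_hom B B') : Prop :=
  commutes i j i' j' /\
  forall (X : hmodule H) (p : hmod_hom A' X) (q : hmod_hom B X),
    hom_eq (hom_comp p j) (hom_comp q i) ->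
    exists w : hmod_hom B' X,
      hom_eq (hom_comp w i') p /\ hom_eq (hom_comp w j') q /\
      forall w' : hmod_hom B' X,
        hom_eq (hom_comp w' i') p -> hom_eq (hom_comp w' j') q -> hom_eq w' w.

Definition proto_exact (H : hyperring) (Mc Ec : morph_class H) : Prop :=
  (exists Z : hmodule H, is_zero_object Z) /\
  (forall Z : hmodule H, is_zero_object Z ->
     forall A : hmodule H,
       (forall f : hmod_hom Z A, Mc Z A f) /\ (forall g : hmod_hom A Z, Ec A Z g)) /\
  (forall (M N : hmodule H) (f : hmod_hom M N), is_iso f -> Mc M N f /\ Ec M N f) /\
  (forall (A B C : hmodule H) (f : hmod_hom A B) (g : hmod_hom B C),
     (Mc A B f -> Mc B C g -> Mc A C (hom_comp g f)) /\
     (Ec A B f -> Ec B C g -> Ec A C (hom_comp g f))) /\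
  (forall (A B A' B' : hmodule H) (i : hmod_hom A B) (j : hmod_hom A A')
          (i' : hmod_hom A' B') (j' : hmod_hom B B'),
     Mc A B i -> Mc A' B' i' -> Ec A A' j -> Ec B B' j' ->
     commutes i j i' j' ->
     (is_pullback i j i' j' <-> is_pushout i j i' j')) /\
  (forall (A' B B' : hmodule H) (i' : hmod_hom A' B') (j' : hmod_hom B B'),
     Mc A' B' i' -> Ec B B' j' ->
     exists (A : hmodule H) (i : hmod_hom A B) (j : hmod_hom A A'),
       Mc A B i /\ Ec A A' j /\ is_pullback i j i' j' /\ is_pushout i j i' j') /\
  (forall (A B A' : hmodule H) (i : hmod_hom A B) (j : hmod_hom A A'),
     Mc A B i -> Ec A A' j ->
     exists (B' : hmodule H) (i' : hmod_hom A' B') (j' : hmod_hom B B'),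
       Mc A' B' i' /\ Ec B B' j' /\ is_pullback i j i' j' /\ is_pushout i j i' j').

From Stdlib Require Import ClassicalEpsilon ProofIrrelevance PropExtensionality FunctionalExtensionality.

(* A subset of an H-module closed under 0, opposites, scalars and hyperaddition
   (every element of a + b) is again an H-module; kernels, preimages, and images
   under strict morphisms are such subsets.  Dividing by one of them, K, via
   b ~ c iff b \in c + k for some k \in K, gives a quotient module with a strict
   epimorphism.  A commutative square with strict monos i, i' and strict epis j, j'
   is a pullback iff every b with j' b \in im i' lies in im i, and it is a pushout
   iff the same holds: the universal arrows come from lifting along strict monos and
   factoring through strict epis, and the converse directions test the square
   against the regular module H and against the projection B -> B / im i.
   A cospan is completed by the submodule j'^-1(im i') of B, a span by the
   quotient B / i(ker j). *)

Lemma hg_add0l (G : hypergroup) (a x : G) : hg_add hg_zero a x <-> x = a.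
Proof. rewrite hg_addC. apply hg_add0. Qed.

Lemma hg_oppK (G : hypergroup) (a : G) : hg_opp (hg_opp a) = a.
Proof. symmetry. apply hg_opp_unique, hg_addC, hg_addN. Qed.

Lemma hg_opp0 (G : hypergroup) : hg_opp (@hg_zero G) = hg_zero.
Proof. symmetry. apply hg_opp_unique, hg_add0. reflexivity. Qed.

Lemma hm_actr0 {H : hyperring} (M : hmodule H) (r : H) : hm_act r (@hg_zero M) = hg_zero.
Proof.
  rewrite <- (hm_act0 H M hg_zero) at 1.
  rewrite <- hm_actA, hr_mulC, hr_mul0. apply hm_act0.
Qed.

Lemma hom_opp {H : hyperring} {M N : hmodule H} (f : hmod_hom M N) (a : M) :
  f (hg_opp a) = hg_opp (f a).
Proof.
  apply hg_opp_unique. rewrite <- (hom_zero _ _ f). apply hom_add, hg_addN.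
Qed.

Lemma strict_fiber {H : hyperring} {M N : hmodule H} (f : hmod_hom M N) (b1 b2 : M) :
  strict f -> f b1 = f b2 -> exists k, f k = hg_zero /\ hg_add b2 k b1.
Proof.
  intros Sf E.
  assert (Hz : hg_add (f b1) (f (hg_opp b2)) hg_zero).
  { rewrite hom_opp, E. apply hg_addN. }
  apply Sf in Hz. destruct Hz as [k [Hk Ek]].
  exists k. split; [now symmetry|].
  apply hg_addC, hg_reversible in Hk. rewrite hg_oppK in Hk. now apply hg_addC.
Qed.

Definition id_hom {H : hyperring} (M : hmodule H) : hmod_hom M M :=
  HModHom H M M (fun x => x) eq_refl (fun r m => eq_refl) (fun _ _ _ h => h).

Definition zero_hom {H : hyperring} (M N : hmodule H) : hmod_hom M N :=
  HModHom H M N (fun _ => hg_zero) eq_refl (fun r m => eq_sym (hm_actr0 N r))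
    (fun _ _ _ _ => proj2 (hg_add0 _ hg_zero hg_zero) eq_refl).

Lemma strict_comp {H : hyperring} {A B C : hmodule H} (f : hmod_hom A B) (g : hmod_hom B C) :
  strict f -> strict g -> strict (hom_comp g f).
Proof.
  intros Sf Sg a b z. simpl. split.
  - intros Hz. apply Sg in Hz. destruct Hz as [c [Hc ->]].
    apply Sf in Hc. destruct Hc as [d [Hd ->]]. eauto.
  - intros [c [Hc ->]]. apply hom_add, hom_add, Hc.
Qed.

Lemma strict_mono_comp {H : hyperring} {A B C : hmodule H}
  (f : hmod_hom A B) (g : hmod_hom B C) :
  strict_mono f -> strict_mono g -> strict_mono (hom_comp g f).
Proof.
  intros [Sf If] [Sg Ig]. split; [now apply strict_comp|].
  intros x y E. now apply If, Ig.
Qed.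

Lemma strict_epi_comp {H : hyperring} {A B C : hmodule H}
  (f : hmod_hom A B) (g : hmod_hom B C) :
  strict_epi f -> strict_epi g -> strict_epi (hom_comp g f).
Proof.
  intros [Sf Uf] [Sg Ug]. split; [now apply strict_comp|].
  intros z. destruct (Ug z) as [y <-]. destruct (Uf y) as [x <-]. now exists x.
Qed.

Lemma strict_of_comp_mono {H : hyperring} {X A B : hmodule H}
  (h : hmod_hom X A) (i : hmod_hom A B) (g : hmod_hom X B) :
  injective_hom i -> strict g -> (forall x, i (h x) = g x) -> strict h.
Proof.
  intros Ii Sg E x y z. split.
  - intros Hz. apply (hom_add _ _ i) in Hz. rewrite !E in Hz.
    apply Sg in Hz. destruct Hz as [c [Hc Ec]].
    exists c. split; [exact Hc|]. apply Ii. now rewrite E.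
  - intros [c [Hc ->]]. now apply hom_add.
Qed.

Lemma strict_of_comp_epi {H : hyperring} {A A' X : hmodule H}
  (j : hmod_hom A A') (h : hmod_hom A' X) (g : hmod_hom A X) :
  surjective_hom j -> strict g -> (forall a, h (j a) = g a) -> strict h.
Proof.
  intros Uj Sg E x y z. split.
  - destruct (Uj x) as [a <-], (Uj y) as [b <-]. rewrite !E.
    intros Hz. apply Sg in Hz. destruct Hz as [c [Hc ->]].
    exists (j c). split; [now apply hom_add|]. now rewrite E.
  - intros [c [Hc ->]]. now apply hom_add.
Qed.

Lemma iso_strict {H : hyperring} {M N : hmodule H} (f : hmod_hom M N) :
  is_iso f -> strict_mono f /\ strict_epi f.
Proof.
  intros [g [Hgf Hfg]].
  assert (Sf : strict f).
  { intros a b z. split.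
    - intros Hz. apply (hom_add _ _ g) in Hz. rewrite !Hgf in Hz. eauto.
    - intros [c [Hc ->]]. now apply hom_add. }
  split; split; auto.
  - intros x y E. now rewrite <- (Hgf x), <- (Hgf y), E.
  - intros y. exists (g y). apply Hfg.
Qed.

Definition trivial_hypergroup : hypergroup.
Proof.
  refine (HyperGroup unit (fun _ _ _ => True) tt (fun _ => tt) _ _ _ _ _ _ _ _).
  - intros; exists tt; exact I.
  - intros; reflexivity.
  - intros; split; intros _; exists tt; tauto.
  - intros [] []; tauto.
  - intros [] _; reflexivity.
  - intros; exact I.
  - intros _ [] _; reflexivity.
  - intros; exact I.
Defined.

Definition trivial_module (H : hyperring) : hmodule H.
Proof.
  refine (HModule H trivial_hypergroup (fun _ _ => tt) _ _ _ _ _).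
  - intros []; reflexivity.
  - intros []; reflexivity.
  - reflexivity.
  - intros x m1 m2 []. simpl. split; [|tauto]. intros _. now exists tt.
  - intros x y m []. simpl. split; [|tauto]. intros _.
    destruct (hg_add_nonempty _ x y) as [r Hr]. now exists r.
Defined.

Lemma trivial_module_zero_object (H : hyperring) : is_zero_object (trivial_module H).
Proof.
  intros A. split.
  - exists (zero_hom _ A). intros f' []. exact (hom_zero _ _ f').
  - exists (zero_hom A _). intros g' x. now destruct (g' x).
Qed.

Lemma zero_object_eq0 {H : hyperring} (Z : hmodule H) :
  is_zero_object Z -> forall x : Z, x = hg_zero.
Proof.
  intros HZ x. destruct (HZ Z) as [[f Hf] _].
  exact (eq_trans (Hf (id_hom Z) x) (eq_sym (Hf (zero_hom Z Z) x))).
Qed.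

Lemma from_zero_object_strict_mono {H : hyperring} (Z A : hmodule H) (f : hmod_hom Z A) :
  is_zero_object Z -> strict_mono f.
Proof.
  intros HZ. pose proof (zero_object_eq0 Z HZ) as Z0. split.
  - intros a b z. rewrite (Z0 a), (Z0 b), hom_zero, hg_add0. split.
    + intros ->. exists hg_zero. rewrite hom_zero, hg_add0. now split.
    + intros [c [_ ->]]. now rewrite (Z0 c), hom_zero.
  - intros x y _. now rewrite (Z0 x), (Z0 y).
Qed.

Lemma to_zero_object_strict_epi {H : hyperring} (A Z : hmodule H) (g : hmod_hom A Z) :
  is_zero_object Z -> strict_epi g.
Proof.
  intros HZ. pose proof (zero_object_eq0 Z HZ) as Z0. split.
  - intros a b z. split.
    + intros _. destruct (hg_add_nonempty _ a b) as [c Hc].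
      exists c. split; [exact Hc|]. now rewrite (Z0 z), (Z0 (g c)).
    + intros [c [Hc ->]]. now apply hom_add.
  - intros y. exists hg_zero. rewrite hom_zero. now rewrite (Z0 y).
Qed.

(** * Submodules and quotients *)

Record submodule_closed {H : hyperring} (B : hmodule H) (S : B -> Prop) : Prop := {
  closed0 : S hg_zero;
  closedD : forall a b c, S a -> S b -> hg_add a b c -> S c;
  closedN : forall a, S a -> S (hg_opp a);
  closedZ : forall r a, S a -> S (hm_act r a)
}.

Arguments closed0 {H B S} _.
Arguments closedD {H B S} _ _ _ _ _ _ _.
Arguments closedN {H B S} _ _ _.
Arguments closedZ {H B S} _ _ _ _.

Definition image {H : hyperring} {M N : hmodule H} (f : hmod_hom M N) (S : M -> Prop)
  (b : N) : Prop := exists a, S a /\ f a = b.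

Lemma submodule_closed_total {H : hyperring} (B : hmodule H) :
  submodule_closed B (fun _ => True).
Proof. now split. Qed.

Lemma submodule_closed_zero {H : hyperring} (B : hmodule H) :
  submodule_closed B (fun b => b = hg_zero).
Proof.
  split.
  - reflexivity.
  - intros a b c -> ->. now rewrite hg_add0.
  - intros a ->. apply hg_opp0.
  - intros r a ->. apply hm_actr0.
Qed.

Lemma submodule_closed_preimage {H : hyperring} {M N : hmodule H} (f : hmod_hom M N)
  (S : N -> Prop) :
  submodule_closed N S -> submodule_closed M (fun a => S (f a)).
Proof.
  intros CS. split.
  - rewrite hom_zero. apply (closed0 CS).
  - intros a b c Sa Sb Hc. exact (closedD CS _ _ _ Sa Sb (hom_add _ _ f _ _ _ Hc)).
  - intros a Sa. rewrite hom_opp. now apply (closedN CS).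
  - intros r a Sa. rewrite hom_act. now apply (closedZ CS).
Qed.

Lemma submodule_closed_image {H : hyperring} {M N : hmodule H} (f : hmod_hom M N)
  (S : M -> Prop) :
  strict f -> submodule_closed M S -> submodule_closed N (image f S).
Proof.
  intros Sf CS. split.
  - exists hg_zero. split; [apply (closed0 CS)|apply hom_zero].
  - intros a b c [x [Sx <-]] [y [Sy <-]] Hc. apply Sf in Hc.
    destruct Hc as [d [Hd ->]]. exists d. split; [exact (closedD CS _ _ _ Sx Sy Hd)|reflexivity].
  - intros a [x [Sx <-]]. exists (hg_opp x). split; [now apply (closedN CS)|apply hom_opp].
  - intros r a [x [Sx <-]]. exists (hm_act r x). split; [now apply (closedZ CS)|apply hom_act].
Qed.

Section Submodule.
Context {H : hyperring} (B : hmodule H) (S : B -> Prop) (CS : submodule_closed B S).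

Definition sub_car : Type := { b : B | S b }.

Lemma sub_eq (x y : sub_car) : proj1_sig x = proj1_sig y -> x = y.
Proof. destruct x, y; simpl; intros; subst; f_equal; apply proof_irrelevance. Qed.

Definition sub_add (x y z : sub_car) : Prop :=
  hg_add (proj1_sig x) (proj1_sig y) (proj1_sig z).
Definition sub_zero : sub_car := exist _ hg_zero (closed0 CS).
Definition sub_opp (x : sub_car) : sub_car :=
  exist _ (hg_opp (proj1_sig x)) (closedN CS _ (proj2_sig x)).
Definition sub_in (x y : sub_car) c (Hc : hg_add (proj1_sig x) (proj1_sig y) c) : sub_car :=
  exist _ c (closedD CS _ _ _ (proj2_sig x) (proj2_sig y) Hc).

Lemma sub_add_nonempty a b : exists c, sub_add a b c.
Proof.
  destruct (hg_add_nonempty _ (proj1_sig a) (proj1_sig b)) as [c Hc].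
  now exists (sub_in a b c Hc).
Qed.

Lemma sub_addC a b c : sub_add a b c <-> sub_add b a c.
Proof. apply hg_addC. Qed.

Lemma sub_addA a b c x :
  (exists y, sub_add a b y /\ sub_add y c x) <-> (exists y, sub_add b c y /\ sub_add a y x).
Proof.
  split; intros [y [H1 H2]].
  - destruct (proj1 (hg_addA _ _ _ _ _) (ex_intro _ _ (conj H1 H2))) as [e [He He2]].
    now exists (sub_in b c e He).
  - destruct (proj2 (hg_addA _ _ _ _ _) (ex_intro _ _ (conj H1 H2))) as [e [He He2]].
    now exists (sub_in a b e He).
Qed.

Lemma sub_add0 a x : sub_add a sub_zero x <-> x = a.
Proof. unfold sub_add. simpl. rewrite hg_add0. split; [apply sub_eq|now intros ->]. Qed.

Lemma sub_zero_unique z : (forall a x, sub_add a z x <-> x = a) -> z = sub_zero.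
Proof. intros Hz. apply (Hz sub_zero z), sub_addC, sub_add0. reflexivity. Qed.

Lemma sub_opp_unique a b : sub_add a b sub_zero -> b = sub_opp a.
Proof. intros E. apply sub_eq, hg_opp_unique, E. Qed.

Definition sub_hypergroup : hypergroup :=
  HyperGroup sub_car sub_add sub_zero sub_opp sub_add_nonempty sub_addC sub_addA sub_add0
    sub_zero_unique (fun a => hg_addN _ _) sub_opp_unique (fun a b c => hg_reversible _ _ _ _).

Definition sub_act (r : H) (x : sub_car) : sub_car :=
  exist _ (hm_act r (proj1_sig x)) (closedZ CS _ _ (proj2_sig x)).

Lemma sub_actDr x (m1 m2 z : sub_hypergroup) :
  @hg_add sub_hypergroup (sub_act x m1) (sub_act x m2) z <->
  exists y : sub_hypergroup, hg_add m1 m2 y /\ z = sub_act x y.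
Proof.
  simpl. unfold sub_add. simpl. rewrite hm_actDr. split.
  - intros [y [Hy E]]. exists (sub_in m1 m2 y Hy). split; [exact Hy|]. now apply sub_eq.
  - intros [y [Hy ->]]. now exists (proj1_sig y).
Qed.

Lemma sub_actDl x y (m z : sub_hypergroup) :
  @hg_add sub_hypergroup (sub_act x m) (sub_act y m) z <-> exists r, hg_add x y r /\ z = sub_act r m.
Proof.
  simpl. unfold sub_add. simpl. rewrite hm_actDl. split.
  - intros [r [Hr E]]. exists r. split; [exact Hr|]. now apply sub_eq.
  - intros [r [Hr ->]]. now exists r.
Qed.

Definition submodule : hmodule H :=
  HModule H sub_hypergroup sub_act
    (fun m => sub_eq (sub_act _ m) m (hm_act1 _ _ _))
    (fun m => sub_eq (sub_act _ m) sub_zero (hm_act0 _ _ _))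
    (fun x y m => sub_eq (sub_act _ m) (sub_act x (sub_act y m)) (hm_actA _ _ _ _ _))
    sub_actDr sub_actDl.

Definition sub_incl : hmod_hom submodule B :=
  HModHom H submodule B (@proj1_sig _ _) eq_refl (fun r m => eq_refl) (fun a b c h => h).

Lemma sub_incl_strict_mono : strict_mono sub_incl.
Proof.
  split.
  - intros a b z. split.
    + intros Hz. now exists (sub_in a b z Hz).
    + intros [c [Hc ->]]. exact Hc.
  - exact sub_eq.
Qed.

End Submodule.

Section Quotient.
Context {H : hyperring} (B : hmodule H) (K : B -> Prop) (CK : submodule_closed B K).

Definition kcongr (b c : B) : Prop := exists k, K k /\ hg_add c k b.

Lemma kcongr_refl b : kcongr b b.
Proof. exists hg_zero. split; [apply (closed0 CK)|]. now apply hg_add0. Qed.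

Lemma kcongr_sym b c : kcongr b c -> kcongr c b.
Proof.
  intros [k [Hk Hb]]. exists (hg_opp k). split; [now apply (closedN CK)|].
  now apply hg_reversible, hg_addC.
Qed.

Lemma kcongr_trans b c d : kcongr b c -> kcongr c d -> kcongr b d.
Proof.
  intros [k1 [Hk1 H1]] [k2 [Hk2 H2]].
  destruct (proj1 (hg_addA _ _ _ _ _) (ex_intro _ _ (conj H2 H1))) as [e [He Hb]].
  exists e. split; [exact (closedD CK _ _ _ Hk2 Hk1 He)|exact Hb].
Qed.

Lemma kcongr0 c : kcongr c hg_zero <-> K c.
Proof.
  split.
  - intros [k [Hk Hc]]. apply hg_add0l in Hc. now subst.
  - intros Hc. exists c. split; [exact Hc|]. now apply hg_add0l.
Qed.

Lemma kcongr_addl x x' y c : kcongr x x' -> hg_add x y c ->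
  exists c', hg_add x' y c' /\ kcongr c c'.
Proof.
  intros [k [Hk Hx]] Hc.
  destruct (proj1 (hg_addA _ _ _ _ _) (ex_intro _ _ (conj Hx Hc))) as [y1 [Hy1 Hc1]].
  apply hg_addC in Hy1.
  destruct (proj2 (hg_addA _ _ _ _ _) (ex_intro _ _ (conj Hy1 Hc1))) as [c' [Hc' Hcc]].
  exists c'. split; [exact Hc'|]. now exists k.
Qed.

Lemma kcongr_add x x' y y' c : kcongr x x' -> kcongr y y' -> hg_add x y c ->
  exists c', hg_add x' y' c' /\ kcongr c c'.
Proof.
  intros Rx Ry Hc.
  destruct (kcongr_addl _ _ _ _ Rx Hc) as [c1 [H1 R1]]. apply hg_addC in H1.
  destruct (kcongr_addl _ _ _ _ Ry H1) as [c2 [H2 R2]]. apply hg_addC in H2.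
  exists c2. split; [exact H2|]. eapply kcongr_trans; eauto.
Qed.

Lemma kcongr_act r a b : kcongr a b -> kcongr (hm_act r a) (hm_act r b).
Proof.
  intros [k [Hk Ha]]. exists (hm_act r k). split; [now apply (closedZ CK)|].
  apply hm_actDr. eauto.
Qed.

Definition repr (b : B) : B := epsilon (inhabits hg_zero) (fun c => kcongr c b).

Lemma repr_kcongr b : kcongr (repr b) b.
Proof.
  apply (epsilon_spec (inhabits hg_zero) (fun c => kcongr c b)).
  exists b. apply kcongr_refl.
Qed.

Lemma repr_eq a b : kcongr a b -> repr a = repr b.
Proof.
  intros R. unfold repr. f_equal. apply functional_extensionality. intros c.
  apply propositional_extensionality. split; intros R'.
  - eapply kcongr_trans; eauto.
  - eapply kcongr_trans; eauto. now apply kcongr_sym.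
Qed.

Lemma repr_idem b : repr (repr b) = repr b.
Proof. apply repr_eq, repr_kcongr. Qed.

(* The quotient is the set of canonical representatives [repr b]. *)
Definition quot_car : Type := { b : B | repr b = b }.
Definition qclass (b : B) : quot_car := exist _ (repr b) (repr_idem b).

Lemma quot_eq (x y : quot_car) : kcongr (proj1_sig x) (proj1_sig y) -> x = y.
Proof.
  destruct x as [x hx], y as [y hy]. simpl. intros R.
  assert (x = y) by (rewrite <- hx, <- hy; now apply repr_eq).
  subst. f_equal. apply proof_irrelevance.
Qed.

Lemma quot_eq_qclass (x : quot_car) a : kcongr (proj1_sig x) a -> x = qclass a.
Proof.
  intros R. apply quot_eq. simpl. eapply kcongr_trans; [exact R|].
  apply kcongr_sym, repr_kcongr.
Qed.

Lemma qclass_eq a b : kcongr a b -> qclass a = qclass b.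
Proof. intros R. apply quot_eq_qclass. simpl. eapply kcongr_trans; [apply repr_kcongr|exact R]. Qed.

Lemma qclass_kcongr a b : qclass a = qclass b -> kcongr a b.
Proof.
  intros E. apply (f_equal (@proj1_sig _ _)) in E. simpl in E.
  eapply kcongr_trans; [apply kcongr_sym, repr_kcongr|]. rewrite E. apply repr_kcongr.
Qed.

Lemma qclass_val (x : quot_car) : qclass (proj1_sig x) = x.
Proof. symmetry. apply quot_eq_qclass, kcongr_refl. Qed.

Lemma qclass_add a b c : hg_add a b c ->
  exists c', hg_add (proj1_sig (qclass a)) (proj1_sig (qclass b)) c' /\ kcongr (repr c) c'.
Proof.
  intros Hc.
  destruct (kcongr_add _ _ _ _ _ (kcongr_sym _ _ (repr_kcongr a))
              (kcongr_sym _ _ (repr_kcongr b)) Hc) as [f [Hf Rf]].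
  exists f. split; [exact Hf|]. eapply kcongr_trans; [apply repr_kcongr|exact Rf].
Qed.

Definition quot_add (x y z : quot_car) : Prop :=
  exists c, hg_add (proj1_sig x) (proj1_sig y) c /\ kcongr (proj1_sig z) c.
Definition quot_zero : quot_car := qclass hg_zero.
Definition quot_opp (x : quot_car) : quot_car := qclass (hg_opp (proj1_sig x)).

Lemma quot_add_nonempty a b : exists c, quot_add a b c.
Proof.
  destruct (hg_add_nonempty _ (proj1_sig a) (proj1_sig b)) as [c Hc].
  exists (qclass c), c. split; [exact Hc|apply repr_kcongr].
Qed.

Lemma quot_addC a b c : quot_add a b c <-> quot_add b a c.
Proof. split; intros [d [Hd R]]; exists d; split; auto; now apply hg_addC. Qed.

Lemma quot_addA_l x y z w :
  (exists u, quot_add x y u /\ quot_add u z w) -> (exists v, quot_add y z v /\ quot_add x v w).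
Proof.
  intros [u [[c [Hc Ru]] [d [Hd Rw]]]].
  destruct (kcongr_add _ _ _ _ _ Ru (kcongr_refl _) Hd) as [d' [Hd' Rd]].
  destruct (proj1 (hg_addA _ _ _ _ _) (ex_intro _ _ (conj Hc Hd'))) as [e [He Hxe]].
  exists (qclass e). split.
  - exists e. split; [exact He|apply repr_kcongr].
  - destruct (kcongr_add _ _ _ _ _ (kcongr_refl (proj1_sig x))
                (kcongr_sym _ _ (repr_kcongr e)) Hxe) as [f [Hf Rf]].
    exists f. split; [exact Hf|]. eapply kcongr_trans; [exact Rw|].
    eapply kcongr_trans; eauto.
Qed.

Lemma quot_addA a b c x :
  (exists y, quot_add a b y /\ quot_add y c x) <-> (exists y, quot_add b c y /\ quot_add a y x).
Proof.
  split; [apply quot_addA_l|].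
  intros [v [Hv Hw]]. apply quot_addC in Hv. apply quot_addC in Hw.
  destruct (quot_addA_l c b a x (ex_intro _ v (conj Hv Hw))) as [u [Hu Hu2]].
  exists u. split; now apply quot_addC.
Qed.

Lemma quot_zero_in : K (proj1_sig quot_zero).
Proof. apply kcongr0, repr_kcongr. Qed.

Lemma quot_add0 a x : quot_add a quot_zero x <-> x = a.
Proof.
  split.
  - intros [c [Hc R]]. apply quot_eq. eapply kcongr_trans; [exact R|].
    exists (proj1_sig quot_zero). split; [apply quot_zero_in|exact Hc].
  - intros ->. destruct (hg_add_nonempty _ (proj1_sig a) (proj1_sig quot_zero)) as [c Hc].
    exists c. split; [exact Hc|]. apply kcongr_sym.
    exists (proj1_sig quot_zero). split; [apply quot_zero_in|exact Hc].
Qed.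

Lemma quot_zero_unique z : (forall a x, quot_add a z x <-> x = a) -> z = quot_zero.
Proof. intros Hz. apply (Hz quot_zero z), quot_addC, quot_add0. reflexivity. Qed.

Lemma quot_addN a : quot_add a (quot_opp a) quot_zero.
Proof.
  destruct (qclass_add _ _ _ (hg_addN _ (proj1_sig a))) as [c [Hc R]].
  rewrite qclass_val in Hc. now exists c.
Qed.

Lemma quot_opp_unique a b : quot_add a b quot_zero -> b = quot_opp a.
Proof.
  intros [c [Hc R]].
  assert (Kc : K c).
  { apply kcongr0. eapply kcongr_trans; [apply kcongr_sym, R|apply repr_kcongr]. }
  apply quot_eq_qclass. apply hg_reversible, hg_addC in Hc. now exists c.
Qed.

Lemma quot_reversible a b c : quot_add b c a -> quot_add a (quot_opp b) c.
Proof.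
  intros [d [Hd R]]. apply hg_reversible in Hd.
  destruct (kcongr_add _ _ _ _ _ (kcongr_sym _ _ R)
              (kcongr_sym _ _ (repr_kcongr (hg_opp (proj1_sig b)))) Hd) as [f [Hf Rf]].
  now exists f.
Qed.

Definition quot_hypergroup : hypergroup :=
  HyperGroup quot_car quot_add quot_zero quot_opp quot_add_nonempty quot_addC quot_addA
    quot_add0 quot_zero_unique quot_addN quot_opp_unique quot_reversible.

Definition quot_act (r : H) (x : quot_car) : quot_car := qclass (hm_act r (proj1_sig x)).

Lemma qclass_act r b : quot_act r (qclass b) = qclass (hm_act r b).
Proof. apply qclass_eq, kcongr_act, repr_kcongr. Qed.

Lemma quot_act1 (m : quot_hypergroup) : quot_act hr_one m = m.
Proof. unfold quot_act. rewrite hm_act1. apply qclass_val. Qed.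

Lemma quot_act0 (m : quot_hypergroup) : quot_act hg_zero m = @hg_zero quot_hypergroup.
Proof. unfold quot_act. now rewrite hm_act0. Qed.

Lemma quot_actA x y (m : quot_hypergroup) : quot_act (hr_mul x y) m = quot_act x (quot_act y m).
Proof. unfold quot_act at 3. rewrite qclass_act. unfold quot_act. now rewrite hm_actA. Qed.

Lemma quot_actDr x (m1 m2 z : quot_hypergroup) :
  @hg_add quot_hypergroup (quot_act x m1) (quot_act x m2) z <->
  exists y : quot_hypergroup, hg_add m1 m2 y /\ z = quot_act x y.
Proof.
  simpl. unfold quot_add, quot_act. simpl. split.
  - intros [c [Hc R]].
    destruct (kcongr_add _ _ _ _ _ (repr_kcongr _) (repr_kcongr _) Hc) as [c' [Hc' R']].
    apply hm_actDr in Hc'. destruct Hc' as [y0 [Hy0 ->]].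
    exists (qclass y0). split.
    + exists y0. split; [exact Hy0|apply repr_kcongr].
    + apply quot_eq_qclass. simpl. eapply kcongr_trans; [exact R|].
      eapply kcongr_trans; [exact R'|]. apply kcongr_act, kcongr_sym, repr_kcongr.
  - intros [y [[c [Hc R]] ->]].
    destruct (qclass_add (hm_act x (proj1_sig m1)) (hm_act x (proj1_sig m2)) (hm_act x c))
      as [f [Hf Rf]]; [apply hm_actDr; eauto|].
    exists f. split; [exact Hf|]. eapply kcongr_trans; [|exact Rf].
    eapply kcongr_trans; [apply repr_kcongr|]. eapply kcongr_trans; [apply kcongr_act, R|].
    apply kcongr_sym, repr_kcongr.
Qed.

Lemma quot_actDl x y (m z : quot_hypergroup) :
  @hg_add quot_hypergroup (quot_act x m) (quot_act y m) z <->
  exists r, hg_add x y r /\ z = quot_act r m.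
Proof.
  simpl. unfold quot_add, quot_act. simpl. split.
  - intros [c [Hc R]].
    destruct (kcongr_add _ _ _ _ _ (repr_kcongr _) (repr_kcongr _) Hc) as [c' [Hc' R']].
    apply hm_actDl in Hc'. destruct Hc' as [r [Hr ->]].
    exists r. split; [exact Hr|]. apply quot_eq_qclass. eapply kcongr_trans; eauto.
  - intros [r [Hr ->]].
    destruct (qclass_add (hm_act x (proj1_sig m)) (hm_act y (proj1_sig m)) (hm_act r (proj1_sig m)))
      as [f [Hf Rf]]; [apply hm_actDl; eauto|].
    now exists f.
Qed.

Definition quot_module : hmodule H :=
  HModule H quot_hypergroup quot_act quot_act1 quot_act0 quot_actA quot_actDr quot_actDl.

Lemma qclass_hom_add a b c :
  hg_add a b c -> hg_add (qclass a : quot_module) (qclass b : quot_module) (qclass c : quot_module).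
Proof. apply qclass_add. Qed.

Definition quot_proj : hmod_hom B quot_module :=
  HModHom H B quot_module qclass eq_refl (fun r m => eq_sym (qclass_act r m)) qclass_hom_add.

Lemma quot_proj_strict_epi : strict_epi quot_proj.
Proof.
  split.
  - intros a b z. split.
    + intros [d [Hd R]]. simpl in Hd.
      destruct (kcongr_add _ _ _ _ _ (repr_kcongr a) (repr_kcongr b) Hd) as [c [Hc Rc]].
      exists c. split; [exact Hc|]. apply quot_eq_qclass. eapply kcongr_trans; eauto.
    + intros [c [Hc ->]]. now apply hom_add.
  - intros y. exists (proj1_sig y). apply qclass_val.
Qed.

Lemma quot_proj_eq a b : quot_proj a = quot_proj b -> kcongr a b.
Proof. apply qclass_kcongr. Qed.

Lemma quot_proj_eq0 b : quot_proj b = hg_zero <-> K b.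
Proof.
  split.
  - intros E. now apply kcongr0, qclass_kcongr.
  - intros Kb. now apply qclass_eq, kcongr0.
Qed.

End Quotient.

(** * Lifting along strict monomorphisms, factoring through strict epimorphisms *)

Lemma strict_mono_lift {H : hyperring} {X A B : hmodule H} (i : hmod_hom A B) (v : hmod_hom X B) :
  strict_mono i -> (forall x, exists a, i a = v x) ->
  exists w : hmod_hom X A, forall x, i (w x) = v x.
Proof.
  intros [Si Ii] Hv.
  set (w := fun x => epsilon (inhabits (@hg_zero A)) (fun a => i a = v x)).
  assert (Hw : forall x, i (w x) = v x).
  { intros x. apply (epsilon_spec (inhabits hg_zero) (fun a => i a = v x)), Hv. }
  assert (W0 : w hg_zero = hg_zero) by (apply Ii; now rewrite Hw, !hom_zero).
  assert (WZ : forall r x, w (hm_act r x) = hm_act r (w x)).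
  { intros r x. apply Ii. now rewrite Hw, !hom_act, Hw. }
  assert (WD : forall a b c, hg_add a b c -> hg_add (w a) (w b) (w c)).
  { intros a b c Hc. apply (hom_add _ _ v) in Hc. rewrite <- !Hw in Hc.
    apply Si in Hc. destruct Hc as [d [Hd E]]. apply Ii in E. now rewrite E. }
  now exists (HModHom H X A w W0 WZ WD).
Qed.

Lemma strict_epi_factor {H : hyperring} {A A' X : hmodule H} (j : hmod_hom A A') (g : hmod_hom A X) :
  strict_epi j -> (forall a, j a = hg_zero -> g a = hg_zero) ->
  exists h : hmod_hom A' X, forall a, h (j a) = g a.
Proof.
  intros [Sj Uj] Hg.
  set (s := fun y => epsilon (inhabits (@hg_zero A)) (fun a => j a = y)).
  assert (Hs : forall y, j (s y) = y).
  { intros y. apply (epsilon_spec (inhabits hg_zero) (fun a => j a = y)), Uj. }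
  set (h := fun y => g (s y)).
  assert (Hh : forall a, h (j a) = g a).
  { intros a. destruct (strict_fiber j _ _ Sj (Hs (j a))) as [k [Hk Ha]].
    apply (hom_add _ _ g) in Ha. rewrite (Hg k Hk) in Ha. now apply hg_add0 in Ha. }
  assert (H0 : h hg_zero = hg_zero) by (rewrite <- (hom_zero _ _ j), Hh; apply hom_zero).
  assert (HZ : forall r y, h (hm_act r y) = hm_act r (h y)).
  { intros r y. rewrite <- (Hs y), <- hom_act, !Hh. apply hom_act. }
  assert (HD : forall a b c, hg_add a b c -> hg_add (h a) (h b) (h c)).
  { intros a b c Hc. rewrite <- (Hs a), <- (Hs b) in Hc. apply Sj in Hc.
    destruct Hc as [d [Hd ->]]. rewrite !Hh. now apply hom_add. }
  now exists (HModHom H A' X h H0 HZ HD).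
Qed.

Lemma regular_actDl (H : hyperring) (x y m z : H) :
  hg_add (hr_mul x m) (hr_mul y m) z <-> exists r, hg_add x y r /\ z = hr_mul r m.
Proof.
  rewrite (hr_mulC H x m), (hr_mulC H y m), hr_mulDr.
  split; intros [r [Hr E]]; exists r; split; auto; rewrite E; apply hr_mulC.
Qed.

Definition regular_module (H : hyperring) : hmodule H :=
  HModule H (hr_hg H) hr_mul (hr_mul1 H) (hr_mul0 H)
    (fun x y m => eq_sym (hr_mulA H x y m)) (hr_mulDr H) (regular_actDl H).

Definition orbit_hom {H : hyperring} (M : hmodule H) (m : M) : hmod_hom (regular_module H) M.
Proof.
  refine (HModHom H (regular_module H) M (fun r => hm_act r m) (hm_act0 H M m)
            (fun r s => hm_actA H M r s m) _).
  intros a b c Hc. apply hm_actDl. eauto.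
Defined.

(** * Pullback and pushout squares *)

Definition cartesian {H : hyperring} {A B A' B' : hmodule H}
  (i : hmod_hom A B) (i' : hmod_hom A' B') (j' : hmod_hom B B') : Prop :=
  forall b a', j' b = i' a' -> exists a, i a = b.

Section Square.
Context {H : hyperring} {A B A' B' : hmodule H}
  (i : hmod_hom A B) (j : hmod_hom A A') (i' : hmod_hom A' B') (j' : hmod_hom B B').

Lemma cartesian_pullback :
  strict_mono i -> strict_mono i' -> commutes i j i' j' -> cartesian i i' j' ->
  is_pullback i j i' j'.
Proof.
  intros Mi Mi' Hc C. split; [exact Hc|].
  intros X u v Huv. unfold hom_eq in Huv. simpl in Huv.
  destruct (strict_mono_lift i v Mi) as [w Hw].
  { intros x. apply (C _ (u x)). now symmetry. }
  exists w. split; [|split].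
  - intros x. simpl. apply (proj2 Mi'). rewrite Huv, <- Hw. symmetry. apply Hc.
  - exact Hw.
  - intros w' _ H2 x. apply (proj2 Mi). rewrite Hw. apply H2.
Qed.

Lemma cartesian_pushout :
  strict_mono i' -> strict_epi j -> strict_epi j' -> commutes i j i' j' -> cartesian i i' j' ->
  is_pushout i j i' j'.
Proof.
  intros Mi' Ej Ej' Hc C. split; [exact Hc|].
  intros X p q Hpq. unfold hom_eq in Hpq. simpl in Hpq.
  destruct (strict_epi_factor j' q Ej') as [w Hw].
  { intros k Hk. rewrite <- (hom_zero _ _ i') in Hk. destruct (C _ _ Hk) as [a <-].
    assert (Ja : j a = hg_zero).
    { apply (proj2 Mi'). rewrite <- Hk. symmetry. apply Hc. }
    now rewrite <- Hpq, Ja, hom_zero. }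
  exists w. split; [|split].
  - intros x. simpl. destruct (proj2 Ej x) as [a <-].
    pose proof (Hc a) as E. simpl in E. now rewrite <- E, Hw, Hpq.
  - exact Hw.
  - intros w' _ H2 y. destruct (proj2 Ej' y) as [b <-]. rewrite Hw. apply H2.
Qed.

Lemma pullback_cartesian : is_pullback i j i' j' -> cartesian i i' j'.
Proof.
  intros [Hc U] b a' E.
  destruct (U (regular_module H) (orbit_hom A' a') (orbit_hom B b)) as [w [_ [Hw _]]].
  { intros r. simpl. now rewrite !hom_act, E. }
  exists (w hr_one). pose proof (Hw hr_one) as Ew. simpl in Ew. rewrite Ew. apply hm_act1.
Qed.

(* Test the pushout against the zero map on [A'] and the projection [B -> B / i(A)]. *)
Lemma pushout_cartesian : strict_mono i -> is_pushout i j i' j' -> cartesian i i' j'.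
Proof.
  intros Mi [Hc U] b a' E.
  pose proof (submodule_closed_image i _ (proj1 Mi) (submodule_closed_total A)) as CI.
  pose (q := quot_proj B _ CI).
  destruct (U _ (zero_hom A' _) q) as [w [Hwi [Hwj _]]].
  { intros a. symmetry. apply (quot_proj_eq0 B _ CI). now exists a. }
  destruct (proj1 (quot_proj_eq0 B _ CI b)) as [a [_ Ea]]; [|now exists a].
  fold q. rewrite <- (Hwj b). simpl. rewrite E. apply (Hwi a').
Qed.

Lemma pullback_iff_pushout :
  strict_mono i -> strict_mono i' -> strict_epi j -> strict_epi j' -> commutes i j i' j' ->
  is_pullback i j i' j' <-> is_pushout i j i' j'.
Proof.
  intros Mi Mi' Ej Ej' Hc. split; intros P.
  - apply cartesian_pushout; auto. now apply pullback_cartesian.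
  - apply cartesian_pullback; auto. now apply pushout_cartesian.
Qed.

End Square.

Lemma complete_cospan {H : hyperring} {A' B B' : hmodule H}
  (i' : hmod_hom A' B') (j' : hmod_hom B B') :
  strict_mono i' -> strict_epi j' ->
  exists (A : hmodule H) (i : hmod_hom A B) (j : hmod_hom A A'),
    strict_mono i /\ strict_epi j /\ commutes i j i' j' /\ cartesian i i' j'.
Proof.
  intros Mi' Ej'.
  pose (S b := image i' (fun _ => True) (j' b)).
  assert (CS : submodule_closed B S).
  { apply submodule_closed_preimage, submodule_closed_image;
      [apply (proj1 Mi')|apply submodule_closed_total]. }
  pose (inc := sub_incl B S CS).
  destruct (strict_mono_lift i' (hom_comp j' inc) Mi') as [j Hj].
  { intros x. destruct (proj2_sig x) as [a' [_ E]]. now exists a'. }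
  simpl in Hj.
  exists (submodule B S CS), inc, j.
  split; [apply sub_incl_strict_mono|split; [split|split]].
  - apply (strict_of_comp_mono j i' (hom_comp j' inc) (proj2 Mi')); [|exact Hj].
    apply strict_comp; [apply sub_incl_strict_mono|apply (proj1 Ej')].
  - intros a'. destruct (proj2 Ej' (i' a')) as [b Eb].
    exists (exist _ b (ex_intro _ a' (conj I (eq_sym Eb)))).
    apply (proj2 Mi'). now rewrite Hj.
  - intros x. symmetry. apply Hj.
  - intros b a' E. now exists (exist _ b (ex_intro _ a' (conj I (eq_sym E)))).
Qed.

Lemma complete_span {H : hyperring} {A B A' : hmodule H}
  (i : hmod_hom A B) (j : hmod_hom A A') :
  strict_mono i -> strict_epi j ->
  exists (B' : hmodule H) (i' : hmod_hom A' B') (j' : hmod_hom B B'),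
    strict_mono i' /\ strict_epi j' /\ commutes i j i' j' /\ cartesian i i' j'.
Proof.
  intros [Si Ii] Ej.
  pose (K := image i (fun a => j a = hg_zero)).
  assert (CK : submodule_closed B K).
  { apply submodule_closed_image; [exact Si|].
    apply (submodule_closed_preimage j (fun y => y = hg_zero)), submodule_closed_zero. }
  pose (q := quot_proj B K CK).
  assert (Kq : forall a b, q b = q (i a) -> exists c, j c = hg_zero /\ hg_add (i a) (i c) b).
  { intros a b E. destruct (quot_proj_eq _ _ CK _ _ E) as [k [[c [Jc <-]] Hk]]. eauto. }
  destruct (strict_epi_factor j (hom_comp q i) Ej) as [i' Hi'].
  { intros a Ja. apply quot_proj_eq0. now exists a. }
  simpl in Hi'.
  exists (quot_module B K CK), i', q.
  split; [split|split; [apply quot_proj_strict_epi|split]].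
  - apply (strict_of_comp_epi j i' (hom_comp q i) (proj2 Ej)); [|exact Hi'].
    apply strict_comp; [exact Si|apply quot_proj_strict_epi].
  - intros x y E. destruct (proj2 Ej x) as [a <-], (proj2 Ej y) as [b <-].
    rewrite !Hi' in E. destruct (Kq _ _ E) as [c [Jc Hc]].
    apply Si in Hc. destruct Hc as [d [Hd Ed]]. apply Ii in Ed. subst d.
    apply (hom_add _ _ j) in Hd. rewrite Jc in Hd. now apply hg_add0 in Hd.
  - intros a. symmetry. apply Hi'.
  - intros b a' E. destruct (proj2 Ej a') as [a <-]. rewrite Hi' in E.
    destruct (Kq _ _ E) as [c [_ Hc]].
    apply Si in Hc. destruct Hc as [d [_ Ed]]. now exists d.
Qed.

Theorem theoremD (H : hyperring) :
  proto_exact H (fun M N f => strict_mono f) (fun M N f => strict_epi f).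
Proof.
  split; [exists (trivial_module H); apply trivial_module_zero_object|].
  split; [|split; [|split; [|split; [|split]]]].
  - intros Z HZ A. split.
    + intros f. now apply from_zero_object_strict_mono.
    + intros g. now apply to_zero_object_strict_epi.
  - intros M N f. apply iso_strict.
  - intros A B C f g. split; [apply strict_mono_comp|apply strict_epi_comp].
  - intros A B A' B' i j i' j'. apply pullback_iff_pushout.
  - intros A' B B' i' j' Mi' Ej'.
    destruct (complete_cospan i' j' Mi' Ej') as (A & i & j & Mi & Ej & Hc & C).
    exists A, i, j. split; [exact Mi|split; [exact Ej|split]].
    + now apply cartesian_pullback.
    + now apply cartesian_pushout.
  - intros A B A' i j Mi Ej.
    destruct (complete_span i j Mi Ej) as (B' & i' & j' & Mi' & Ej' & Hc & C).
    exists B', i', j'. split; [exact Mi'|split; [exact Ej'|split]].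
    + now apply cartesian_pullback.
    + now apply cartesian_pushout.
Qed.
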